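(* Let $\mathbf{FdHilb}_{\mathrm{Un}}$ be the category of finite-dimensional Hilbert spaces with unitary maps, $\mathbf{Conv}$ the category of convex sets with affine maps, and $\mathbf{EMod}$ the category of effect modules over $[0,1]$. For $H$ in $\mathbf{FdHilb}_{\mathrm{Un}}$ let $\mathcal{DM}(H)=\{A \ge 0 : \mathrm{tr}(A)=1\}$ be the convex set of density operators and $\mathcal{E}f(H)=\{A : 0\le A\le I\}$ (Löwner order) the effect module of effects. There is a dual adjunction $\mathbf{Conv}(-,[0,1]) \colon \mathbf{Conv}\rightleftarrows \mathbf{EMod}^{\mathrm{op}} \colon \mathbf{EMod}(-,[0,1])$, and there are natural isomorphisms $$\mathrm{hs}_{\mathcal{E}f}\colon \mathcal{E}f(H)\xrightarrow{\ \cong\ } \mathbf{Conv}\big(\mathcal{DM}(H),[0,1]\big),\ A\mapsto \mathrm{tr}(A\,-),\qquad \mathrm{hs}_{\mathcal{DM}}\colon \mathcal{DM}(H)\xrightarrow{\ \cong\ } \mathbf{EMod}\big(\mathcal{E}f(H),[0,1]\big),\ B\mapsto \mathrm{tr}(B\,-),$$ in $\mathbf{EMod}$ and $\mathbf{Conv}$ respectively, which give rise to a map of adjunctions from the self-adjunction $(-)^\dagger \dashv (-)^\dagger$ between $\mathbf{FdHilb}_{\mathrm{Un}}$ and $\mathbf{FdHilb}_{\mathrm{Un}}^{\mathrm{op}}$ to the adjunction $\mathbf{Conv}\rightleftarrows\mathbf{EMod}^{\mathrm{op}}$, with vertical functors $\mathcal{DM}\colon \mathbf{FdHilb}_{\mathrm{Un}}\to\mathbf{Conv}$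 (states) and $\mathcal{E}f\colon \mathbf{FdHilb}_{\mathrm{Un}}^{\mathrm{op}}\to\mathbf{EMod}^{\mathrm{op}}$ (statements/effects).
   Context: An effect algebra is a partial commutative monoid $(E,0,\oplus)$, where $\oplus$ is a partial, commutative, associative binary operation with unit $0$ (write $x\perp y$ when $x\oplus y$ is defined), with an orthosupplement $(-)^\perp$ such that $x^\perp$ is the unique element with $x\oplus x^\perp = 1 := 0^\perp$ and $x\perp 1\Rightarrow x=0$. An effect module over $[0,1]$ is an effect algebra with a scalar multiplication by $[0,1]$ that preserves $\oplus$ in each variable and is a monoid action; morphisms preserve $1$, defined sums and scalars. $\mathcal{E}f(H)$ is an effect module with $A\perp B$ iff $A+B\le I$, $A\oplus B = A+B$, $A^\perp = I-A$, and usual scalar multiplication. Convex sets are Eilenberg-Moore algebras of the finitary distribution monad; $\mathcal{DM}(H)$ is convex under ordinary convex combinations of operators. On a unitary $U\colon H\to K$, both functors act by $A\mapsto UAU^\dagger$. The adjunction $\mathbf{Conv}\rightleftarrows\mathbf{EMod}^{\mathrm{op}}$ is given by homming into $[0,1]$: $\mathbf{Conv}(X,[0,1])$ is an effect module with pointwise partial sum (defined when the pointwise sum stays $\le 1$) and pointwise scalar multiplication, $\mathbf{EMod}(Y,[0,1])$ is a convex set with pointwise convex combinations, and the correspondence is by swapping arguments. $\mathrm{tr}$ is the trace of an operator. *)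

From HB Require Import structures.
From mathcomp Require Import all_boot all_order all_algebra.
From mathcomp Require Import complex.
From mathcomp Require Import reals.

Set Implicit Arguments.
Unset Strict Implicit.
Unset Printing Implicit Defensive.

Import Order.TTheory GRing.Theory Num.Theory.
Local Open Scope ring_scope.
Local Open Scope complex_scope.

(* The finite-dimensional Hilbert space H is C^n (columns), C = R[i].
   An operator H -> K (K = C^m) is a matrix 'M_(m, n). *)

Definition dagger (R : realType) (m n : nat) (A : 'M[R[i]]_(m, n)) : 'M[R[i]]_(n, m) :=
  (map_mx conjc A)^T.

Definition unitary (R : realType) (m n : nat) (U : 'M[R[i]]_(m, n)) : Prop :=
  U *m dagger U = 1%:M /\ dagger U *m U = 1%:M.

(* A >= 0 : <v, A v> >= 0 for every vector v (order of R[i]: real and >= 0) *)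
Definition psd (R : realType) (n : nat) (A : 'M[R[i]]_n) : Prop :=
  forall v : 'cV[R[i]]_n, 0 <= (dagger v *m A *m v) ord0 ord0.

Definition loewner (R : realType) (n : nat) (A B : 'M[R[i]]_n) : Prop := psd (B - A).

Definition density (R : realType) (n : nat) (A : 'M[R[i]]_n) : Prop :=
  psd A /\ \tr A = 1.

Definition effect (R : realType) (n : nat) (A : 'M[R[i]]_n) : Prop :=
  psd A /\ loewner A 1%:M.

Definition rsc (R : realType) (n : nat) (r : R) (A : 'M[R[i]]_n) : 'M[R[i]]_n :=
  (r%:C) *: A.

(* hs_Ef(A) = tr(A -), a function DM(H) -> [0,1] (real part; the trace is real) *)
Definition hsEf (R : realType) (n : nat) (A : 'M[R[i]]_n) : 'M[R[i]]_n -> R :=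
  fun rho => complex.Re (\tr (A *m rho)).

Definition hsDM (R : realType) (n : nat) (B : 'M[R[i]]_n) : 'M[R[i]]_n -> R :=
  fun A => complex.Re (\tr (B *m A)).

(* f : DM(C^n) -> R is an element of Conv(DM(C^n), [0,1]):
   values in [0,1] and affine (preserves convex combinations).
   Such functions are identified when they agree on DM(C^n). *)
Definition conv01 (R : realType) (n : nat) (f : 'M[R[i]]_n -> R) : Prop :=
  (forall rho, density rho -> 0 <= f rho <= 1) /\
  (forall rho sigma (r : R), density rho -> density sigma -> 0 <= r <= 1 ->
     f (rsc r rho + rsc (1 - r) sigma) = r * f rho + (1 - r) * f sigma).

(* phi : Ef(C^n) -> R is an element of EMod(Ef(C^n), [0,1]):
   values in [0,1], preserves 1, defined sums (A + B <= I), and scalars.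
   Such functions are identified when they agree on Ef(C^n). *)
Definition emod01 (R : realType) (n : nat) (phi : 'M[R[i]]_n -> R) : Prop :=
  (forall A, effect A -> 0 <= phi A <= 1) /\
  phi 1%:M = 1 /\
  (forall A B, effect A -> effect B -> loewner (A + B) 1%:M ->
     phi (A + B) = phi A + phi B) /\
  (forall (r : R) A, 0 <= r <= 1 -> effect A -> phi (rsc r A) = r * phi A).

Definition DM_Ef_functorial (R : realType) : Prop :=
  forall (m n : nat) (U : 'M[R[i]]_(m, n)), unitary U ->
    (forall rho, density rho -> density (U *m rho *m dagger U)) /\
    (forall A, effect A -> effect (U *m A *m dagger U)).

(* hs_Ef : Ef(C^n) -> Conv(DM(C^n),[0,1]) is an isomorphism of effect modules:
   well-defined, bijective (modulo equality on DM), an EMod-morphism whose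
   inverse is also an EMod-morphism (i.e. it reflects orthogonality). *)
Definition hsEf_EMod_iso (R : realType) (n : nat) : Prop :=
  (forall A rho : 'M[R[i]]_n, effect A -> density rho ->
     0 <= \tr (A *m rho) <= 1) /\
  (forall A : 'M[R[i]]_n, effect A -> conv01 (hsEf A)) /\
  (forall A B : 'M[R[i]]_n, effect A -> effect B ->
     (forall rho, density rho -> hsEf A rho = hsEf B rho) -> A = B) /\
  (forall f : 'M[R[i]]_n -> R, conv01 f ->
     exists A, effect A /\ forall rho, density rho -> f rho = hsEf A rho) /\
  (forall rho : 'M[R[i]]_n, density rho -> hsEf 1%:M rho = 1) /\
  (forall A B : 'M[R[i]]_n, effect A -> effect B -> loewner (A + B) 1%:M ->
     forall rho, density rho -> hsEf (A + B) rho = hsEf A rho + hsEf B rho) /\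
  (forall (r : R) (A : 'M[R[i]]_n), 0 <= r <= 1 -> effect A ->
     forall rho, density rho -> hsEf (rsc r A) rho = r * hsEf A rho) /\
  (forall A B : 'M[R[i]]_n, effect A -> effect B ->
     (forall rho, density rho -> hsEf A rho + hsEf B rho <= 1) ->
     loewner (A + B) 1%:M).

Definition hsDM_Conv_iso (R : realType) (n : nat) : Prop :=
  (forall B A : 'M[R[i]]_n, density B -> effect A ->
     0 <= \tr (B *m A) <= 1) /\
  (forall B : 'M[R[i]]_n, density B -> emod01 (hsDM B)) /\
  (forall B B' : 'M[R[i]]_n, density B -> density B' ->
     (forall A, effect A -> hsDM B A = hsDM B' A) -> B = B') /\
  (forall phi : 'M[R[i]]_n -> R, emod01 phi ->
     exists B, density B /\ forall A, effect A -> phi A = hsDM B A) /\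
  (forall (rho sigma : 'M[R[i]]_n) (r : R), density rho -> density sigma ->
     0 <= r <= 1 -> forall A, effect A ->
     hsDM (rsc r rho + rsc (1 - r) sigma) A = r * hsDM rho A + (1 - r) * hsDM sigma A).

Definition hs_natural (R : realType) : Prop :=
  forall (m n : nat) (U : 'M[R[i]]_(m, n)), unitary U ->
    (forall (A : 'M[R[i]]_m) (rho : 'M[R[i]]_n), effect A -> density rho ->
       hsEf (dagger U *m A *m U) rho = hsEf A (U *m rho *m dagger U)) /\
    (forall (rho : 'M[R[i]]_m) (A : 'M[R[i]]_n), density rho -> effect A ->
       hsDM (dagger U *m rho *m U) A = hsDM rho (U *m A *m dagger U)).

(* compatibility with the units/counits (the unit of (-)^dagger -| (-)^dagger is
   the identity; the unit/counit of Conv <-> EMod^op are evaluation maps):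
   EMod(hs_Ef,[0,1]) o eta_{DM(H)} = hs_DM  and
   Conv(hs_DM,[0,1]) o eps_{Ef(H)} = hs_Ef, both of which amount to: *)
Definition hs_unit_compat (R : realType) (n : nat) : Prop :=
  forall A rho : 'M[R[i]]_n, effect A -> density rho -> hsDM rho A = hsEf A rho.

(* The content lies in the two representation statements: every affine map
   DM(H) -> [0,1], and every effect-module map Ef(H) -> [0,1], is tr(A -) for a
   unique A.  Such a map g respects any two positive combinations of its arguments
   that agree: on density operators because agreeing combinations have the same
   trace, so that after normalization they are one and the same convex combination;
   on effects by rescaling until the total weight is at most 1 and using additivity
   and homogeneity.  As all arguments are hermitian, g then respects every complex
   linear relation among them.  Polarization expresses each matrix unit e_ij through
   the rank-one projections onto e_i, e_j, e_i + e_j and e_i + i e_j, and this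
   relation determines the representing matrix A.  Positivity and uniqueness of A,
   like tr(AB) >= 0 for positive A and B (spectral theorem), are tested on rank-one
   projections. *)

From HB Require Import structures.
From mathcomp Require Import all_boot all_order all_algebra.
From mathcomp Require Import complex reals.
From mathcomp Require Import spectral ring.

Set Implicit Arguments.
Unset Strict Implicit.
Unset Printing Implicit Defensive.
Import Order.TTheory GRing.Theory Num.Theory.
Local Open Scope ring_scope.

Section PositiveMatrices.
Variable C : numClosedFieldType.

(** * Adjoints and positive matrices *)

Definition adjmx m n (A : 'M[C]_(m, n)) : 'M[C]_(n, m) := (map_mx Num.conj A)^T.

Lemma adjmxE m n (A : 'M[C]_(m, n)) i j : adjmx A i j = (A j i)^*.
Proof. by rewrite !mxE. Qed.

Lemma adjmxM m n p (A : 'M[C]_(m, n)) (B : 'M[C]_(n, p)) :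
  adjmx (A *m B) = adjmx B *m adjmx A.
Proof. by rewrite /adjmx map_mxM trmx_mul. Qed.

Lemma adjmxK m n (A : 'M[C]_(m, n)) : adjmx (adjmx A) = A.
Proof. by apply/matrixP=> i j; rewrite !mxE conjCK. Qed.

Lemma adjmxD m n (A B : 'M[C]_(m, n)) : adjmx (A + B) = adjmx A + adjmx B.
Proof. by apply/matrixP=> i j; rewrite !mxE rmorphD. Qed.

Lemma adjmxZ m n a (A : 'M[C]_(m, n)) : adjmx (a *: A) = a^* *: adjmx A.
Proof. by apply/matrixP=> i j; rewrite !mxE rmorphM. Qed.

Lemma adjmx0 m n : adjmx (0 : 'M[C]_(m, n)) = 0.
Proof. by apply/matrixP=> i j; rewrite !mxE rmorph0. Qed.

Lemma adjmx1 n : adjmx (1%:M : 'M[C]_n) = 1%:M.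
Proof. by apply/matrixP=> i j; rewrite !mxE eq_sym rmorphMn ?rmorph1. Qed.

Section ConjTranspose.
Local Open Scope sesquilinear_scope.

Lemma adjmx_trmxC m n (A : 'M[C]_(m, n)) : A ^t* = adjmx A.
Proof. by rewrite /adjmx map_trmx. Qed.

End ConjTranspose.

Definition sform n (A : 'M[C]_n) (x y : 'cV[C]_n) : C := (adjmx x *m A *m y) ord0 ord0.
Definition qform n (A : 'M[C]_n) (v : 'cV[C]_n) : C := sform A v v.
Definition psdmx n (A : 'M[C]_n) : Prop := forall v, 0 <= qform A v.

Section Forms.
Variable n : nat.
Implicit Types (A B : 'M[C]_n) (v x y : 'cV[C]_n).

Lemma sform_adjmx A x y : sform (adjmx A) x y = (sform A y x)^*.
Proof.
rewrite /sform.
have -> : adjmx x *m adjmx A *m y = adjmx (adjmx y *m A *m x).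
  by rewrite !adjmxM adjmxK mulmxA.
by rewrite adjmxE.
Qed.

Lemma sformDmx A B x y : sform (A + B) x y = sform A x y + sform B x y.
Proof. by rewrite /sform mulmxDr mulmxDl mxE. Qed.

Lemma sformNmx A x y : sform (- A) x y = - sform A x y.
Proof. by rewrite /sform mulmxN mulNmx mxE. Qed.

Lemma sformZmx a A x y : sform (a *: A) x y = a * sform A x y.
Proof. by rewrite /sform -scalemxAr -scalemxAl mxE. Qed.

Lemma sformDl A x x' y : sform A (x + x') y = sform A x y + sform A x' y.
Proof. by rewrite /sform adjmxD !mulmxDl mxE. Qed.

Lemma sformDr A x y y' : sform A x (y + y') = sform A x y + sform A x y'.
Proof. by rewrite /sform mulmxDr mxE. Qed.

Lemma sformZl A a x y : sform A (a *: x) y = a^* * sform A x y.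
Proof. by rewrite /sform adjmxZ -!scalemxAl mxE. Qed.

Lemma sformZr A a x y : sform A x (a *: y) = a * sform A x y.
Proof. by rewrite /sform -scalemxAr mxE. Qed.

Lemma qform_adjmx A v : qform (adjmx A) v = (qform A v)^*.
Proof. exact: sform_adjmx. Qed.

Lemma qformD A B v : qform (A + B) v = qform A v + qform B v.
Proof. exact: sformDmx. Qed.

Lemma qformB A B v : qform (A - B) v = qform A v - qform B v.
Proof. by rewrite qformD; congr (_ + _); apply: sformNmx. Qed.

Lemma qformZ a A v : qform (a *: A) v = a * qform A v.
Proof. exact: sformZmx. Qed.

Lemma qform0 A : qform A 0 = 0.
Proof. by rewrite /qform /sform adjmx0 !mul0mx mxE. Qed.

Lemma qform_conj m (U : 'M[C]_(m, n)) A (v : 'cV[C]_m) :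
  qform (U *m A *m adjmx U) v = qform A (adjmx U *m v).
Proof. by rewrite /qform /sform adjmxM adjmxK !mulmxA. Qed.

Definition ecol (i : 'I_n) : 'cV[C]_n := delta_mx i ord0.

Lemma ecol_neq0 i : ecol i != 0.
Proof.
by apply/negP => /eqP /matrixP /(_ i ord0) /eqP; rewrite !mxE !eqxx oner_eq0.
Qed.

Lemma sform_ecol A i j : sform A (ecol i) (ecol j) = A i j.
Proof.
rewrite /sform /ecol.
have -> : adjmx (ecol i) = delta_mx ord0 i.
  by apply/matrixP=> a b; rewrite adjmxE !mxE; case: (b == i); case: (a == ord0);
    rewrite ?rmorph0 ?rmorph1.
by rewrite -rowE -colE !mxE.
Qed.

(* Polarization with the test vectors e_i + e_j and e_i + i e_j. *)
Lemma qform_eq0 A : (forall v, qform A v = 0) -> A = 0.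
Proof.
move=> A0; apply/matrixP=> i j; rewrite mxE.
have Akk k : A k k = 0 by rewrite -sform_ecol; apply: A0.
have := A0 (ecol i + ecol j); have := A0 (ecol i + 'i *: ecol j).
rewrite /qform !sformDl !sformDr !sformZl !sformZr !sform_ecol !Akk conjCi.
rewrite !(mulr0, add0r, addr0) => Ei Ej.
have Aji : A j i = - A i j by apply/eqP; rewrite -addr_eq0 addrC Ej.
move: Ei; rewrite Aji mulrN mulNr opprK -mulr2n => /eqP; rewrite mulrn_eq0 /=.
by rewrite mulf_eq0 (negPf (neq0Ci C)) => /eqP.
Qed.

Lemma psdmx_herm A : psdmx A -> adjmx A = A.
Proof.
move=> psdA; apply/eqP; rewrite -subr_eq0; apply/eqP; apply: qform_eq0 => v.
by rewrite qformB qform_adjmx geC0_conj ?subrr.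
Qed.

Lemma psdmx0 : psdmx (0 : 'M[C]_n).
Proof. by move=> v; rewrite /qform /sform mulmx0 mul0mx mxE. Qed.

Lemma psdmxD A B : psdmx A -> psdmx B -> psdmx (A + B).
Proof. by move=> psdA psdB v; rewrite qformD addr_ge0. Qed.

Lemma psdmxZ a A : 0 <= a -> psdmx A -> psdmx (a *: A).
Proof. by move=> a0 psdA v; rewrite qformZ mulr_ge0. Qed.

Lemma qform1E v : qform 1%:M v = \sum_i v i ord0 * (v i ord0)^*.
Proof. by rewrite /qform /sform mulmx1 mxE; apply: eq_bigr => k _; rewrite !mxE mulrC. Qed.

Lemma psdmx1 : psdmx (1%:M : 'M[C]_n).
Proof. by move=> v; rewrite qform1E sumr_ge0 // => i _; apply: mul_conjC_ge0. Qed.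

Lemma qform1_gt0 v : v != 0 -> 0 < qform 1%:M v.
Proof.
move=> v0; rewrite lt_def psdmx1 andbT; apply: contra v0; rewrite qform1E => /eqP.
move=> /(psumr_eq0P (fun k _ => mul_conjC_ge0 (v k ord0))) vk0.
by apply/eqP/matrixP=> i j; rewrite ord1 mxE; apply/eqP; rewrite -mul_conjC_eq0 vk0.
Qed.

Lemma qform1_neq0 v : v != 0 -> qform 1%:M v != 0.
Proof. by move=> v0; rewrite gt_eqF // qform1_gt0. Qed.

Lemma psdmx_scalar a : 0 <= a -> psdmx (a%:M : 'M[C]_n).
Proof. by move=> a0; rewrite -scalemx1; apply: psdmxZ => //; apply: psdmx1. Qed.

Lemma psdmx_scalarB_le (a b : C) A :
  psdmx (a%:M - A) -> a <= b -> psdmx (b%:M - A).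
Proof.
move=> psdaA ab; have -> : b%:M - A = (b - a)%:M + (a%:M - A).
  by rewrite addrA -raddfD /= subrK.
by apply: psdmxD => //; apply: psdmx_scalar; rewrite subr_ge0.
Qed.

Lemma psdmx_diag_ge0 A i : psdmx A -> 0 <= A i i.
Proof. by move=> psdA; rewrite -sform_ecol; apply: psdA. Qed.

End Forms.

Lemma psdmx_conj m n (U : 'M[C]_(m, n)) (A : 'M[C]_n) :
  psdmx A -> psdmx (U *m A *m adjmx U).
Proof. by move=> psdA v; rewrite qform_conj. Qed.

(** * Rank-one projections *)

Section Rank1.
Variable n : nat.
Implicit Types (A B X : 'M[C]_n) (v w : 'cV[C]_n).

Definition rank1mx v : 'M[C]_n := v *m adjmx v.

Lemma mxtrace_mul_rank1mx A v : \tr (A *m rank1mx v) = qform A v.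
Proof.
by rewrite /rank1mx mulmxA mxtrace_mulC /mxtrace big_ord1 /qform /sform mulmxA.
Qed.

Lemma psdmx_rank1mx v : psdmx (rank1mx v).
Proof.
move=> w; rewrite /qform /sform /rank1mx !mulmxA -mulmxA mxE big_ord1.
have -> : (adjmx v *m w) ord0 ord0 = ((adjmx w *m v) ord0 ord0)^*.
  by rewrite -[in RHS](mulmx1 (adjmx w)) -/(sform _ w v) -sform_adjmx adjmx1 /sform mulmx1.
by rewrite mul_conjC_ge0.
Qed.

Lemma psdmx_spectral A : psdmx A -> exists (P : 'M[C]_n) (d : 'rV[C]_n),
  [/\ adjmx P *m P = 1%:M, P *m adjmx P = 1%:M, (forall k, 0 <= d ord0 k) &
      A = adjmx P *m diag_mx d *m P].
Proof.
move=> psdA.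
have /orthomx_spectralP eA : A \is normalmx.
  by apply/normalmxP; rewrite adjmx_trmxC psdmx_herm.
set P := spectralmx A in eA; set d := spectral_diag A in eA.
have uP : P \is unitarymx by apply: spectral_unitarymx.
have PP : P *m adjmx P = 1%:M by rewrite -adjmx_trmxC; apply/unitarymxP.
have iP : invmx P = adjmx P by rewrite invmx_unitary // adjmx_trmxC.
have PP' : adjmx P *m P = 1%:M by rewrite -iP mulVmx // unitarymx_unit.
rewrite iP in eA; exists P, d; split => // k.
have := psdmx_diag_ge0 k (psdmx_conj P psdA).
by rewrite eA !mulmxA PP mul1mx -mulmxA PP mulmx1 mxE eqxx mulr1n.
Qed.

Lemma mxtrace_mul_diag A (d : 'rV[C]_n) :
  \tr (A *m diag_mx d) = \sum_i A i i * d ord0 i.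
Proof. by rewrite mul_mx_diag /mxtrace; apply: eq_bigr => i _; rewrite mxE. Qed.

Lemma mxtrace_mul_psdmx_ge0 A B : psdmx A -> psdmx B -> 0 <= \tr (A *m B).
Proof.
move=> psdA /psdmx_spectral [P [d [_ _ d0 ->]]].
rewrite !mulmxA mxtrace_mulC !mulmxA mxtrace_mul_diag sumr_ge0 // => i _.
by rewrite mulr_ge0 // psdmx_diag_ge0 //; apply: psdmx_conj.
Qed.

Lemma qform_diag (d : 'rV[C]_n) v :
  qform (diag_mx d) v = \sum_i d ord0 i * (v i ord0 * (v i ord0)^*).
Proof. by rewrite /qform /sform mul_mx_diag mxE; apply: eq_bigr => k _; rewrite !mxE; ring. Qed.

Lemma psdmx_traceB X : psdmx X -> psdmx ((\tr X)%:M - X).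
Proof.
move=> /psdmx_spectral [P [d [PP PP' d0 eX]]].
have trX : \tr X = \sum_i d ord0 i.
  by rewrite eX mxtrace_mulC mulmxA PP' mul1mx mxtrace_diag.
have -> : (\tr X)%:M - X = adjmx P *m ((\tr X)%:M - diag_mx d) *m adjmx (adjmx P).
  by rewrite adjmxK mulmxBr mulmxBl mul_mx_scalar -scalemxAl PP scalemx1 -eX.
apply: psdmx_conj => v.
have -> : (\tr X)%:M - diag_mx d = diag_mx (\row_k (\tr X - d ord0 k)).
  by apply/matrixP=> i j; rewrite !mxE; case: (i == j); rewrite ?mulr1n ?mulr0n ?subrr.
rewrite qform_diag sumr_ge0 // => i _; rewrite mulr_ge0 ?mul_conjC_ge0 //.
by rewrite mxE subr_ge0 trX (bigD1 i) //= lerDl sumr_ge0.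
Qed.

Definition projmx v : 'M[C]_n := (qform 1%:M v)^-1 *: rank1mx v.

Lemma mxtrace_mul_projmx A v : \tr (A *m projmx v) = (qform 1%:M v)^-1 * qform A v.
Proof. by rewrite /projmx -scalemxAr mxtraceZ mxtrace_mul_rank1mx. Qed.

Lemma qform_projmx A v : v != 0 -> qform A v = qform 1%:M v * \tr (A *m projmx v).
Proof. by move=> v0; rewrite mxtrace_mul_projmx mulrA mulfV ?mul1r // qform1_neq0. Qed.

Lemma rank1mx_projmx v : v != 0 -> rank1mx v = qform 1%:M v *: projmx v.
Proof. by move=> v0; rewrite /projmx scalerA mulfV ?scale1r // qform1_neq0. Qed.

Lemma mxtrace_projmx v : v != 0 -> \tr (projmx v) = 1.
Proof. by move=> v0; rewrite -[projmx v]mul1mx mxtrace_mul_projmx mulVf // qform1_neq0. Qed.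

Lemma psdmx_projmx v : psdmx (projmx v).
Proof. by apply: psdmxZ; [rewrite invr_ge0; apply: psdmx1 | apply: psdmx_rank1mx]. Qed.

Lemma mxtrace_mul_projmx_ge0 A v : psdmx A -> 0 <= \tr (A *m projmx v).
Proof. by move=> psdA; apply: mxtrace_mul_psdmx_ge0 psdA (psdmx_projmx v). Qed.

Lemma psdmx_1Bprojmx v : v != 0 -> psdmx (1%:M - projmx v).
Proof. by move=> v0; have := psdmx_traceB (psdmx_projmx v); rewrite mxtrace_projmx. Qed.

Lemma projmx_inj A B :
  (forall v, v != 0 -> \tr (A *m projmx v) = \tr (B *m projmx v)) -> A = B.
Proof.
move=> eqAB; apply/eqP; rewrite -subr_eq0; apply/eqP; apply: qform_eq0 => v.
have [->|v0] := eqVneq v 0; first exact: qform0.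
by rewrite qformB (qform_projmx A v0) (qform_projmx B v0) eqAB // subrr.
Qed.

Lemma psdmx_projmx_test A : (forall v, v != 0 -> 0 <= \tr (A *m projmx v)) -> psdmx A.
Proof.
move=> A0 v; have [->|v0] := eqVneq v 0; first by rewrite qform0.
by rewrite (qform_projmx A v0) mulr_ge0 ?A0 //; apply: psdmx1.
Qed.

Lemma psdmx_1B_projmx_test A :
  (forall v, v != 0 -> \tr (A *m projmx v) <= 1) -> psdmx (1%:M - A).
Proof.
move=> A1; apply: psdmx_projmx_test => v v0.
by rewrite mulmxBl mul1mx raddfB /= mxtrace_projmx // subr_ge0 A1.
Qed.

Definition densmx X := psdmx X /\ \tr X = 1.
Definition effmx X := psdmx X /\ psdmx (1%:M - X).

Lemma densmx_projmx v : v != 0 -> densmx (projmx v).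
Proof. by move=> v0; split; [apply: psdmx_projmx | apply: mxtrace_projmx]. Qed.

Lemma effmx_projmx v : v != 0 -> effmx (projmx v).
Proof. by move=> v0; split; [apply: psdmx_projmx | apply: psdmx_1Bprojmx]. Qed.

Lemma mxtrace_effmx_densmx A X : effmx A -> densmx X -> 0 <= \tr (A *m X) <= 1.
Proof.
move=> [psdA psd1A] [psdX trX]; rewrite mxtrace_mul_psdmx_ge0 //=.
have := mxtrace_mul_psdmx_ge0 psd1A psdX.
by rewrite mulmxBl mul1mx raddfB /= trX subr_ge0.
Qed.

End Rank1.

Lemma densmx_conj m n (U : 'M[C]_(m, n)) (X : 'M[C]_n) :
  adjmx U *m U = 1%:M -> densmx X -> densmx (U *m X *m adjmx U).
Proof.
move=> UU [psdX trX]; split; first exact: psdmx_conj.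
by rewrite mxtrace_mulC !mulmxA UU mul1mx.
Qed.

Lemma effmx_conj m n (U : 'M[C]_(m, n)) (A : 'M[C]_n) :
  U *m adjmx U = 1%:M -> effmx A -> effmx (U *m A *m adjmx U).
Proof.
move=> UU [psdA psd1A]; split; first exact: psdmx_conj.
have -> : 1%:M - U *m A *m adjmx U = U *m (1%:M - A) *m adjmx U.
  by rewrite mulmxBr mulmxBl mulmx1 UU.
exact: psdmx_conj.
Qed.

(** * Maps respecting positive combinations *)

Section Combinations.
Variable n : nat.
Implicit Types (s : seq (C * 'M[C]_n)) (K : 'M[C]_n -> Prop) (g : 'M[C]_n -> C).

Definition combmx s : 'M[C]_n := \sum_(p <- s) p.1 *: p.2.
Definition combval g s : C := \sum_(p <- s) p.1 * g p.2.
Definition combwt s : C := \sum_(p <- s) p.1.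
Definition scale_comb (k : C) s := [seq (k * p.1, p.2) | p <- s].

Definition respects_pos_comb K g := forall s1 s2,
  (forall p, p \in s1 -> 0 <= p.1 /\ K p.2) ->
  (forall p, p \in s2 -> 0 <= p.1 /\ K p.2) ->
  combmx s1 = combmx s2 -> combval g s1 = combval g s2.

Lemma combmx_scale k s : combmx (scale_comb k s) = k *: combmx s.
Proof. by rewrite /combmx big_map scaler_sumr; apply: eq_bigr => p _; rewrite scalerA. Qed.

Lemma combval_scale g k s : combval g (scale_comb k s) = k * combval g s.
Proof. by rewrite /combval big_map mulr_sumr; apply: eq_bigr => p _; rewrite mulrA. Qed.

Lemma combwt_scale k s : combwt (scale_comb k s) = k * combwt s.
Proof. by rewrite /combwt big_map mulr_sumr. Qed.

Lemma combwt_ge0 s : (forall p, p \in s -> 0 <= p.1) -> 0 <= combwt s.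
Proof. by move=> s0; rewrite /combwt big_seq sumr_ge0 // => p /s0. Qed.

Lemma mxtrace_combmx s : (forall p, p \in s -> \tr p.2 = 1) -> \tr (combmx s) = combwt s.
Proof.
rewrite /combmx /combwt; elim: s => [|p s IH] tr1; first by rewrite !big_nil mxtrace0.
rewrite !big_cons mxtraceD mxtraceZ tr1 ?mem_head // mulr1 IH // => q qs.
by apply: tr1; rewrite in_cons qs orbT.
Qed.

Lemma adjmx_combmx s : adjmx (combmx s) = \sum_(p <- s) (p.1)^* *: adjmx p.2.
Proof.
rewrite /combmx; elim: s => [|p s IH]; first by rewrite !big_nil adjmx0.
by rewrite !big_cons adjmxD adjmxZ IH.
Qed.

Section RespectsCombinations.
Variables (K : 'M[C]_n -> Prop) (g : 'M[C]_n -> C).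
Hypothesis gK : respects_pos_comb K g.

(* Split into the terms with nonnegative and with negative coefficients. *)
Lemma respects_real_comb0 s : (forall p, p \in s -> p.1 \is Num.real /\ K p.2) ->
  combmx s = 0 -> combval g s = 0.
Proof.
move=> sK s0.
pose P := fun p : C * 'M[C]_n => 0 <= p.1.
pose sP := filter P s.
pose sN := scale_comb (-1) (filter (predC P) s).
have eL : combmx s = combmx sP - combmx sN.
  rewrite /combmx (bigID P) /= big_filter big_map big_filter -sumrN; congr (_ + _).
  by apply: eq_bigr => p _; rewrite mulN1r scaleNr opprK.
have eF : combval g s = combval g sP - combval g sN.
  rewrite /combval (bigID P) /= big_filter big_map big_filter -sumrN; congr (_ + _).
  by apply: eq_bigr => p _; rewrite mulN1r mulNr opprK.
have sPK p : p \in sP -> 0 <= p.1 /\ K p.2.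
  by rewrite mem_filter => /andP [Pp /sK []].
have sNK p : p \in sN -> 0 <= p.1 /\ K p.2.
  move=> /mapP [q]; rewrite mem_filter => /andP [Pq /sK [qR qK]] -> /=.
  by rewrite mulN1r oppr_ge0 ltW // real_ltNge ?real0.
rewrite eF (gK sPK sNK) ?subrr //.
by apply/eqP; rewrite -subr_eq0 -eL s0.
Qed.

Hypothesis K_herm : forall X, K X -> adjmx X = X.

(* Split into real and imaginary parts, using that the arguments are hermitian. *)
Lemma respects_comb0 s : (forall p, p \in s -> K p.2) -> combmx s = 0 -> combval g s = 0.
Proof.
move=> sK s0.
pose sRe := [seq ('Re p.1, p.2) | p <- s].
pose sIm := [seq ('Im p.1, p.2) | p <- s].
have conj0 : \sum_(p <- s) (p.1)^* *: p.2 = 0.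
  transitivity (\sum_(p <- s) (p.1)^* *: adjmx p.2).
    by apply: eq_big_seq => p /sK /K_herm ->.
  by rewrite -adjmx_combmx s0 adjmx0.
have Re0 : combmx sRe = 0.
  rewrite /combmx big_map.
  have -> : \sum_(p <- s) 'Re p.1 *: p.2 = 2^-1 *: (combmx s + \sum_(p <- s) (p.1)^* *: p.2).
    rewrite -big_split /= scaler_sumr; apply: eq_bigr => p _.
    by rewrite ReE -scalerDl scalerA mulrC.
  by rewrite conj0 s0 addr0 scaler0.
have Im0 : combmx sIm = 0.
  rewrite /combmx big_map.
  have -> : \sum_(p <- s) 'Im p.1 *: p.2 = ('i / 2) *: (\sum_(p <- s) (p.1)^* *: p.2 - combmx s).
    rewrite -sumrN -big_split /= scaler_sumr; apply: eq_bigr => p _.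
    by rewrite ImE -scaleNr -scalerDl scalerA; congr (_ *: _); ring.
  by rewrite conj0 s0 subrr scaler0.
have sReK p : p \in sRe -> p.1 \is Num.real /\ K p.2.
  by move=> /mapP [q qs ->] /=; split; [apply: Creal_Re | apply: sK].
have sImK p : p \in sIm -> p.1 \is Num.real /\ K p.2.
  by move=> /mapP [q qs ->] /=; split; [apply: Creal_Im | apply: sK].
have -> : combval g s = combval g sRe + 'i * combval g sIm.
  rewrite /combval !big_map mulr_sumr -big_split /=; apply: eq_bigr => p _.
  by rewrite {1}(Crect p.1); ring.
by rewrite (respects_real_comb0 sReK Re0) (respects_real_comb0 sImK Im0) mulr0 addr0.
Qed.

End RespectsCombinations.

Section DensityCombinations.
Variable g : 'M[C]_n -> C.
Hypothesis g_affine : forall X Y (l : C), densmx X -> densmx Y -> 0 <= l -> l <= 1 ->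
  g (l *: X + (1 - l) *: Y) = l * g X + (1 - l) * g Y.

Lemma densmx_comb_normal s : (forall p, p \in s -> 0 <= p.1 /\ densmx p.2) ->
  [/\ combwt s = 0, combmx s = 0 & combval g s = 0] \/
  (0 < combwt s /\ exists2 Y, densmx Y &
     combmx s = combwt s *: Y /\ combval g s = combwt s * g Y).
Proof.
elim: s => [|[a X] s IH] sD; first by left; rewrite /combwt /combmx /combval !big_nil.
have [/= a0 XD] := sD (a, X) (mem_head _ _).
have {}sD p : p \in s -> 0 <= p.1 /\ densmx p.2.
  by move=> ps; apply: sD; rewrite in_cons ps orbT.
have wt0 := combwt_ge0 (fun p ps => (sD p ps).1).
rewrite /combwt /combmx /combval !big_cons /= -/(combwt s) -/(combmx s) -/(combval g s).
case: (IH sD) => [[-> -> ->] | [wt_gt0 [Y YD [-> ->]]]].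
  rewrite !addr0; move: a0; rewrite le0r => /orP [/eqP -> | a_gt0].
    by left; rewrite scale0r mul0r.
  by right; split => //; exists X.
right; set w := a + combwt s.
have w_gt0 : 0 < w by rewrite /w ltr_wpDl.
have w_neq0 : w != 0 by rewrite gt_eqF.
set l := a / w.
have l0 : 0 <= l by rewrite /l divr_ge0 // ltW.
have l1 : l <= 1 by rewrite /l ler_pdivrMr // mul1r /w lerDl.
split => //; exists (l *: X + (1 - l) *: Y).
  split; first by apply: psdmxD; apply: psdmxZ; rewrite ?subr_ge0 //; [case: XD | case: YD].
  by rewrite mxtraceD !mxtraceZ XD.2 YD.2 !mulr1 subrKC.
rewrite g_affine // scalerDr !scalerA.
by split; [congr (_ *: _ + _ *: _) |]; rewrite /l /w; field.
Qed.

(* Positive combinations that agree have the same trace, hence the same weight,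
   and after normalization they are the same convex combination. *)
Lemma densmx_respects_pos_comb : respects_pos_comb (@densmx n) g.
Proof.
move=> s1 s2 s1D s2D eq12.
have trwt s : (forall p, p \in s -> 0 <= p.1 /\ densmx p.2) -> \tr (combmx s) = combwt s.
  by move=> sD; apply: mxtrace_combmx => p /sD [_ []].
have eqwt : combwt s1 = combwt s2 by rewrite -(trwt _ s1D) -(trwt _ s2D) eq12.
case: (densmx_comb_normal s1D) => [[wt1 _ ->] | [wt1 [Y1 _ [eq1 ->]]]];
case: (densmx_comb_normal s2D) => [[wt2 _ ->] | [wt2 [Y2 _ [eq2 ->]]]] //.
- by move: wt2; rewrite -eqwt wt1 ltxx.
- by move: wt1; rewrite eqwt wt2 ltxx.
have wt_neq0 : combwt s1 != 0 by rewrite gt_eqF.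
suff -> : Y1 = Y2 by rewrite eqwt.
by apply: (scalerI wt_neq0); rewrite -eq1 eq12 eq2 eqwt.
Qed.

End DensityCombinations.

Section EffectCombinations.
Variable g : 'M[C]_n -> C.
Hypothesis g_add : forall A B, effmx A -> effmx B -> psdmx (1%:M - (A + B)) ->
  g (A + B) = g A + g B.
Hypothesis g_scale : forall (l : C) A, 0 <= l -> l <= 1 -> effmx A -> g (l *: A) = l * g A.

Lemma effmx0 : effmx (0 : 'M[C]_n).
Proof. by split; [apply: psdmx0 | rewrite subr0; apply: psdmx1]. Qed.

Lemma effect_map0 : g 0 = 0.
Proof.
have := g_add effmx0 effmx0; rewrite addr0 subr0 => /(_ (@psdmx1 n)) /eqP.
by rewrite -subr_eq subrr eq_sym => /eqP.
Qed.

Lemma effmx_comb_sub s : (forall p, p \in s -> 0 <= p.1 /\ effmx p.2) -> combwt s <= 1 ->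
  [/\ psdmx (combmx s), psdmx ((combwt s)%:M - combmx s) & g (combmx s) = combval g s].
Proof.
elim: s => [|[a X] s IH] sE.
  rewrite /combwt /combmx /combval !big_nil subr0 => _.
  by split; [apply: psdmx0 | apply: psdmx_scalar | apply: effect_map0].
have [/= a0 [psdX psd1X]] := sE (a, X) (mem_head _ _).
have {}sE p : p \in s -> 0 <= p.1 /\ effmx p.2.
  by move=> ps; apply: sE; rewrite in_cons ps orbT.
have wt0 := combwt_ge0 (fun p ps => (sE p ps).1).
rewrite /combwt /combmx /combval !big_cons /= -/(combwt s) -/(combmx s) -/(combval g s).
move=> wt1.
have a1 : a <= 1 by apply: le_trans wt1; rewrite lerDl.
have wts1 : combwt s <= 1 by apply: le_trans wt1; rewrite lerDr.
have [psdS psdwS gS] := IH sE wts1.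
have psdaX : psdmx (a *: X) by apply: psdmxZ.
have psdwaXS : psdmx ((a + combwt s)%:M - (a *: X + combmx s)).
  rewrite raddfD /= opprD addrACA -scalemx1 -scalerBr.
  by apply: psdmxD => //; apply: psdmxZ.
split; [exact: psdmxD | exact: psdwaXS |].
have aXE : effmx (a *: X).
  split => //; apply: (@psdmx_scalarB_le n a) a1.
  by rewrite -scalemx1 -scalerBr; apply: psdmxZ.
have SE : effmx (combmx s) by split => //; exact: psdmx_scalarB_le psdwS wts1.
rewrite g_add //; last exact: psdmx_scalarB_le psdwaXS wt1.
by rewrite g_scale ?gS.
Qed.

(* Rescale both combinations so that their weights are at most 1. *)
Lemma effmx_respects_pos_comb : respects_pos_comb (@effmx n) g.
Proof.
move=> s1 s2 s1E s2E eq12.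
have wt1 := combwt_ge0 (fun p ps => (s1E p ps).1).
have wt2 := combwt_ge0 (fun p ps => (s2E p ps).1).
have w_gt0 : 0 < 1 + combwt s1 + combwt s2 by rewrite -addrA ltr_wpDr // addr_ge0.
set k := (1 + combwt s1 + combwt s2)^-1.
have k_gt0 : 0 < k by rewrite invr_gt0.
have kE s : (forall p, p \in s -> 0 <= p.1 /\ effmx p.2) ->
    forall p, p \in scale_comb k s -> 0 <= p.1 /\ effmx p.2.
  by move=> sE p /mapP [q /sE [q0 qE] ->]; split; rewrite //= mulr_ge0 // ltW.
have kwt s : combwt s <= combwt s1 + combwt s2 -> combwt (scale_comb k s) <= 1.
  move=> wtle; rewrite combwt_scale /k mulrC ler_pdivrMr // mul1r -addrA.
  by apply: le_trans wtle _; rewrite lerDr.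
have le1 : combwt s1 <= combwt s1 + combwt s2 by rewrite lerDl.
have le2 : combwt s2 <= combwt s1 + combwt s2 by rewrite lerDr.
have [_ _ g1] := effmx_comb_sub (kE _ s1E) (kwt _ le1).
have [_ _ g2] := effmx_comb_sub (kE _ s2E) (kwt _ le2).
apply: (mulfI (lt0r_neq0 k_gt0)).
by rewrite -!combval_scale -g1 -g2 !combmx_scale eq12.
Qed.

End EffectCombinations.

End Combinations.

(** * Polarization and the representing matrix *)

Lemma oneDi_neq0 : (1 + 'i : C) != 0.
Proof.
apply/eqP => oneDi0.
have : (1 + 'i) * (1 - 'i) = 1 - 'i * 'i :> C by ring.
rewrite oneDi0 mul0r mulCii opprK => /eqP.
by rewrite eq_sym -[1 + 1](natrD _ 1 1) pnatr_eq0.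
Qed.

Section Polarization.
Variable n : nat.

Definition polar_terms (a : C) (i j : 'I_n) : seq (C * 'cV[C]_n) :=
  [:: (a / 2, ecol i + ecol j); (a * 'i / 2, ecol i + 'i *: ecol j);
      (- (a * (1 + 'i) / 2), ecol i); (- (a * (1 + 'i) / 2), ecol j)].

Lemma polar_termsP a i j :
  \sum_(p <- polar_terms a i j) p.1 *: rank1mx p.2 = a *: delta_mx i j.
Proof.
apply/matrixP => x y; rewrite !big_cons big_nil addr0 !mxE !big_ord1 !mxE !eqxx !andbT.
rewrite !rmorphD !rmorphM /= !conjC_nat conjCi -mulnb natrM.
move: ((x == i)%:R : C) ((x == j)%:R : C) ((y == i)%:R : C) ((y == j)%:R : C) => xi xj yi yj.
apply/eqP; rewrite -subr_eq0; apply/eqP.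
(* The difference is a multiple of 1 + 'i ^+ 2 = 0. *)
have two_neq0 : (2 : C) != 0 by rewrite pnatr_eq0.
set L := (X in X = 0).
have -> : L = (1 + 'i * 'i) * (a * (xj * yi - xi * yj - 'i * xj * yj) / 2) by rewrite /L; field.
by rewrite mulCii addrN mul0r.
Qed.

Lemma ecol_add_neq0 (i j : 'I_n) : ecol i + ecol j != 0.
Proof.
apply/negP => /eqP /matrixP /(_ i ord0); rewrite !mxE !eqxx andbT => /eqP.
by rewrite gt_eqF // ltr_wpDr ?ler0n ?ltr01.
Qed.

Lemma ecol_addi_neq0 (i j : 'I_n) : ecol i + 'i *: ecol j != 0.
Proof.
apply/negP => /eqP /matrixP /(_ i ord0); rewrite !mxE !eqxx andbT.
by case: (i == j) => /= /eqP; rewrite ?mulr1 ?(negPf oneDi_neq0) // mulr0 addr0 oner_eq0.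
Qed.

Lemma polar_terms_neq0 a i j : all (fun p => p.2 != 0) (polar_terms a i j).
Proof. by rewrite /= ecol_add_neq0 ecol_addi_neq0 !ecol_neq0. Qed.

Lemma polar_termsZ a i j (h : 'cV[C]_n -> C) :
  \sum_(p <- polar_terms a i j) p.1 * h p.2 = a * \sum_(p <- polar_terms 1 i j) p.1 * h p.2.
Proof. by rewrite !big_cons !big_nil /=; ring. Qed.

Definition mx_terms (X : 'M[C]_n) : seq (C * 'cV[C]_n) :=
  flatten [seq polar_terms (X p.1 p.2) p.1 p.2 | p <- index_enum ('I_n * 'I_n)%type].

Lemma mx_termsP X : \sum_(p <- mx_terms X) p.1 *: rank1mx p.2 = X.
Proof.
rewrite big_flatten big_map /=; under eq_bigr do rewrite polar_termsP.
by rewrite [RHS]matrix_sum_delta pair_bigA.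
Qed.

Definition rank1_comb (t : seq (C * 'cV[C]_n)) : seq (C * 'M[C]_n) :=
  [seq (p.1 * qform 1%:M p.2, projmx p.2) | p <- t].

Lemma combmx_rank1_comb t : (forall p, p \in t -> p.2 != 0) ->
  combmx (rank1_comb t) = \sum_(p <- t) p.1 *: rank1mx p.2.
Proof.
move=> t0; rewrite /combmx big_map big_seq [RHS]big_seq; apply: eq_bigr => p /t0 p0 /=.
by rewrite -scalerA -rank1mx_projmx.
Qed.

Lemma combval_rank1_comb g t : combval g (rank1_comb t) =
  \sum_(p <- t) p.1 * (qform 1%:M p.2 * g (projmx p.2)).
Proof. by rewrite /combval big_map; apply: eq_bigr => p _; rewrite mulrA. Qed.

(* Indices are transposed because tr (A X) pairs A a b with X b a. *)
Definition reprmx (g : 'M[C]_n -> C) : 'M[C]_n :=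
  \matrix_(a, b) \sum_(p <- polar_terms 1 b a) p.1 * (qform 1%:M p.2 * g (projmx p.2)).

Lemma mxtrace_reprmx g X : \tr (reprmx g *m X) = combval g (rank1_comb (mx_terms X)).
Proof.
rewrite combval_rank1_comb big_flatten big_map /=; under [RHS]eq_bigr do
  rewrite (polar_termsZ _ _ _ (fun v => qform 1%:M v * g (projmx v))).
rewrite /mxtrace; under [LHS]eq_bigr do rewrite mxE.
by rewrite exchange_big pair_bigA; apply: eq_bigr => p _; rewrite ?mxE mulrC.
Qed.

Section Representation.
Variables (K : 'M[C]_n -> Prop) (g : 'M[C]_n -> C).
Hypotheses (gK : respects_pos_comb K g) (K_herm : forall X, K X -> adjmx X = X).
Hypothesis K_projmx : forall v, v != 0 -> K (projmx v).

Lemma reprmxP X : K X -> g X = \tr (reprmx g *m X).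
Proof.
move=> XK; rewrite mxtrace_reprmx.
have t0 p : p \in mx_terms X -> p.2 != 0.
  by move=> /flattenP [r /mapP [q _ ->]] /(allP (polar_terms_neq0 _ _ _)).
have sK p : p \in (-1, X) :: rank1_comb (mx_terms X) -> K p.2.
  by rewrite in_cons => /orP [/eqP -> // | /mapP [q /t0 q0 ->]]; apply: K_projmx.
have := respects_comb0 gK K_herm sK.
rewrite /combmx /combval !big_cons -/(combmx _) -/(combval _ _) combmx_rank1_comb //.
rewrite mx_termsP /= scaleN1r addNr mulN1r => /(_ erefl) /eqP.
by rewrite addrC subr_eq0 => /eqP.
Qed.

End Representation.

End Polarization.
End PositiveMatrices.

(** * Density operators and effects on C^n *)

Local Open Scope complex_scope.

Section RealPart.
Variable R : rcfType.
Implicit Types x y : R[i].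

Lemma ReM_real (r : R) x : complex.Re (r%:C * x) = r * complex.Re x.
Proof. by case: x => a b /=; rewrite mul0r subr0. Qed.

Lemma ge0_ReE x : 0 <= x -> x = (complex.Re x)%:C.
Proof. by move=> /ger0_real /RRe_real. Qed.

Lemma Re_itv01 x : 0 <= x <= 1 -> 0 <= complex.Re x <= 1.
Proof. by case: x => a b; rewrite !lecE /= => /andP [/andP [_ ->] /andP [_ ->]]. Qed.

Lemma Re_le1 x : 0 <= x -> complex.Re x <= 1 -> x <= 1.
Proof. by case: x => a b; rewrite !lecE /= => /andP [/eqP -> _] ->; rewrite eqxx. Qed.

Lemma ge0_Re_inj x y : 0 <= x -> 0 <= y -> complex.Re x = complex.Re y -> x = y.
Proof. by move=> x0 y0 eqRe; rewrite (ge0_ReE x0) (ge0_ReE y0) eqRe. Qed.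

Lemma real_complex1B (r : R) : 1 - r%:C = (1 - r)%:C :> R[i].
Proof. by rewrite rmorphB rmorph1. Qed.

Lemma itv01_real x : 0 <= x -> x <= 1 -> x = (complex.Re x)%:C /\ 0 <= complex.Re x <= 1.
Proof. by move=> x0 x1; split; [apply: ge0_ReE | apply: Re_itv01; rewrite x0 x1]. Qed.

End RealPart.

Section Duality.
Variable R : realType.
Local Notation C := R[i].

Lemma densityE n (A : 'M[C]_n) : density A = densmx A. Proof. by []. Qed.
Lemma effectE n (A : 'M[C]_n) : effect A = effmx A. Proof. by []. Qed.
Lemma loewnerE n (A B : 'M[C]_n) : loewner A B = psdmx (B - A). Proof. by []. Qed.
Lemma daggerE m n (A : 'M[C]_(m, n)) : dagger A = adjmx A. Proof. by []. Qed.
Lemma rscE n (r : R) (A : 'M[C]_n) : rsc r A = r%:C *: A. Proof. by []. Qed.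

Lemma psdmx_Re_projmx_inj n (A B : 'M[C]_n) : psdmx A -> psdmx B ->
  (forall v, v != 0 -> complex.Re (\tr (A *m projmx v)) = complex.Re (\tr (B *m projmx v))) ->
  A = B.
Proof.
move=> psdA psdB eqAB; apply: projmx_inj => v v0.
exact: ge0_Re_inj (mxtrace_mul_projmx_ge0 v psdA) (mxtrace_mul_projmx_ge0 v psdB) (eqAB v v0).
Qed.

Lemma DM_Ef_is_functorial : DM_Ef_functorial R.
Proof.
move=> m n U [UU1 UU2]; rewrite daggerE in UU1 UU2 *.
by split => X; rewrite ?densityE ?effectE; [apply: densmx_conj | apply: effmx_conj].
Qed.

Lemma hs_is_natural : hs_natural R.
Proof.
move=> m n U _; rewrite /hsEf /hsDM !daggerE.
by split=> X Y _ _; rewrite -!mulmxA mxtrace_mulC !mulmxA.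
Qed.

Lemma hs_is_unit_compat n : hs_unit_compat R n.
Proof. by move=> A rho _ _; rewrite /hsDM /hsEf mxtrace_mulC. Qed.

Lemma conv01_hsEf_repr n (f : 'M[C]_n -> R) : conv01 f ->
  exists A, effect A /\ forall rho, density rho -> f rho = hsEf A rho.
Proof.
move=> [f01 f_affine].
pose g X : C := (f X)%:C.
have g_affine X Y (l : C) : densmx X -> densmx Y -> 0 <= l -> l <= 1 ->
    g (l *: X + (1 - l) *: Y) = l * g X + (1 - l) * g Y.
  move=> XD YD l0 l1; have [-> l01] := itv01_real l0 l1.
  by rewrite real_complex1B -!rscE /g f_affine // rmorphD !rmorphM.
have gA := reprmxP (densmx_respects_pos_comb g_affine) (fun X XD => psdmx_herm XD.1)
  (@densmx_projmx _ n).
exists (reprmx g); split; last by move=> rho rhoD; rewrite /hsEf -gA.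
have f01v v : v != 0 -> 0 <= \tr (reprmx g *m projmx v) <= 1.
  move=> v0; have vD := densmx_projmx v0.
  by rewrite -(gA _ vD) /g ler0c lecE /= eqxx; apply: f01.
by split; [apply: psdmx_projmx_test | apply: psdmx_1B_projmx_test] => v /f01v /andP [].
Qed.

Lemma hsEf_is_EMod_iso n : hsEf_EMod_iso R n.
Proof.
have trRe01 A rho : effect A -> density rho -> 0 <= hsEf A rho <= 1.
  by move=> AE rhoD; apply/Re_itv01/mxtrace_effmx_densmx.
split; [|split; [|split; [|split; [|split; [|split; [|split]]]]]].
- exact: mxtrace_effmx_densmx.
- move=> A AE; split => [rho|rho sigma r _ _ _]; first exact: trRe01.
  rewrite /hsEf !rscE mulmxDr -!scalemxAr raddfD /= !mxtraceZ raddfD /=.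
  by rewrite !ReM_real.
- move=> A B; rewrite !effectE => -[psdA _] [psdB _] eqAB.
  by apply: psdmx_Re_projmx_inj psdA psdB _ => v v0; apply/eqAB/densmx_projmx.
- exact: conv01_hsEf_repr.
- by move=> rho [_ trrho]; rewrite /hsEf mul1mx trrho.
- by move=> A B _ _ _ rho _; rewrite /hsEf mulmxDl !raddfD.
- by move=> r A _ _ rho _; rewrite /hsEf rscE -scalemxAl mxtraceZ ReM_real.
move=> A B; rewrite !effectE loewnerE => -[psdA _] [psdB _] AB1.
apply: psdmx_1B_projmx_test => v v0; have vD := densmx_projmx v0.
rewrite mulmxDl raddfD /=; apply: Re_le1.
  by rewrite addr_ge0 // mxtrace_mul_projmx_ge0.
by rewrite raddfD; apply: AB1.
Qed.

Lemma emod01_hsDM_repr n (phi : 'M[C]_n -> R) : emod01 phi ->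
  exists B, density B /\ forall A, effect A -> phi A = hsDM B A.
Proof.
move=> [phi01 [phi1 [phi_add phi_scale]]].
pose g X : C := (phi X)%:C.
have g_add A B : effmx A -> effmx B -> psdmx (1%:M - (A + B)) -> g (A + B) = g A + g B.
  by move=> AE BE ABE; rewrite /g (phi_add _ _ AE BE ABE) rmorphD.
have g_scale (l : C) A : 0 <= l -> l <= 1 -> effmx A -> g (l *: A) = l * g A.
  move=> l0 l1 AE; have [-> l01] := itv01_real l0 l1.
  by rewrite /g -rscE (phi_scale _ _ l01 AE) rmorphM.
have gB := reprmxP (effmx_respects_pos_comb g_add g_scale) (fun X XE => psdmx_herm XE.1)
  (@effmx_projmx _ n).
exists (reprmx g); split; last by move=> A AE; rewrite /hsDM -(gB _ AE).
split.
  apply: psdmx_projmx_test => v v0.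
  by rewrite -(gB _ (effmx_projmx v0)) /g ler0c; case/andP: (phi01 _ (effmx_projmx v0)).
have oneE : effmx (1%:M : 'M[C]_n) by split; [apply: psdmx1 | rewrite subrr; apply: psdmx0].
by rewrite -[reprmx g]mulmx1 -(gB _ oneE) /g phi1.
Qed.

Lemma hsDM_is_Conv_iso n : hsDM_Conv_iso R n.
Proof.
have trBA B A : density B -> effect A -> 0 <= \tr (B *m A) <= 1.
  by move=> BD AE; rewrite mxtrace_mulC; apply: mxtrace_effmx_densmx.
split; [|split; [|split; [|split]]].
- exact: trBA.
- move=> B BD; split; [|split; [|split]].
  + by move=> A AE; apply/Re_itv01/trBA.
  + by rewrite /hsDM mulmx1 BD.2.
  + by move=> A A' _ _ _; rewrite /hsDM mulmxDr !raddfD.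
  + by move=> r A _ _; rewrite /hsDM rscE -scalemxAr mxtraceZ ReM_real.
- move=> B B'; rewrite !densityE => -[psdB _] [psdB' _] eqBB'.
  by apply: psdmx_Re_projmx_inj psdB psdB' _ => v v0; apply/eqBB'/effmx_projmx.
- exact: emod01_hsDM_repr.
move=> rho sigma r _ _ _ A _; rewrite /hsDM !rscE mulmxDl -!scalemxAl raddfD /=.
by rewrite !mxtraceZ raddfD /= !ReM_real.
Qed.

End Duality.

Theorem theorem4p8 (R : realType) :
  DM_Ef_functorial R /\
  (forall n : nat, hsEf_EMod_iso R n) /\
  (forall n : nat, hsDM_Conv_iso R n) /\
  hs_natural R /\
  (forall n : nat, hs_unit_compat R n).
Proof.
split; first exact: DM_Ef_is_functorial.
split; first exact: hsEf_is_EMod_iso.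
split; first exact: hsDM_is_Conv_iso.
split; first exact: hs_is_natural.
exact: hs_is_unit_compat.
Qed.
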